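(* Let $T_1,T_2$ be tables joined on column $J$, with frequencies $a_v$ and $b_v$ for $v\in\mathcal U$. Let $0<p_1,q_1,p_2,q_2\le 1$, let $S_1=\mathrm{UBS}_{p_1,q_1}(T_1,J)$ and $S_2=\mathrm{UBS}_{p_2,q_2}(T_2,J)$ be produced with a common hash function $h$, let $p=\min\{p_1,p_2\}$, and let $\hat J_{\mathrm{count}} = \frac{1}{p\,q_1q_2}|S_1\bowtie_J S_2|$. Then $$\mathrm{Var}(\hat J_{\mathrm{count}}) = \frac{1-p}{p}\gamma_{2,2} + \frac{1-q_2}{p q_2}\gamma_{2,1} + \frac{1-q_1}{p q_1}\gamma_{1,2} + \frac{(1-q_1)(1-q_2)}{p q_1 q_2}\gamma_{1,1},$$ where $\gamma_{i,j}=\sum_{v\in\mathcal U} a_v^i b_v^j$.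
   Context: $T_1,T_2$ are finite multisets of tuples, each having a join attribute $J$ taking values in a finite set $\mathcal U$; $a_v$ (resp. $b_v$) is the number of tuples of $T_1$ (resp. $T_2$) whose $J$-value is $v$. $S_1\bowtie_J S_2$ is the set of pairs $(t_1,t_2)\in S_1\times S_2$ with $t_1.J=t_2.J$. Universe-Bernoulli sampling $\mathrm{UBS}_{p,q}(T,J)$: given a hash function $h:\mathcal U\to[0,1]$, each tuple $t\in T$ with $h(t.J)<p$ is included in the sample independently with probability $q$; all other tuples are excluded. The hash function is perfect: the values $h(v)$, $v\in\mathcal U$, are independent and uniform on $[0,1]$; the same $h$ is used for both tables; the Bernoulli inclusion coins are independent across all tuples of both tables and independent of $h$. *)

From HB Require Import structures.
From mathcomp Require Import all_boot all_order all_algebra.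
From mathcomp Require Import all_classical all_reals all_analysis.
Set Implicit Arguments. Unset Strict Implicit. Unset Printing Implicit Defensive.
Import Order.TTheory GRing.Theory Num.Theory.
Local Open Scope ring_scope.
Local Open Scope classical_set_scope.

(* A table is modelled by a finite type of tuple identities [I] (so that a
   multiset of tuples is allowed) together with the join-attribute map
   [j : I -> U]. *)

Definition freq (U I : finType) (j : I -> U) (v : U) : nat :=
  #|[set i : I | j i == v]|.

Definition gamma (R : realType) (U I1 I2 : finType) (j1 : I1 -> U) (j2 : I2 -> U)
  (k l : nat) : R :=
  \sum_(v : U) ((freq j1 v)%:R ^+ k * (freq j2 v)%:R ^+ l).

Definition upd (U : eqType) (R : Type) (h : U -> R) (v : U) (x : R) : U -> R :=
  fun w => if w == v then x else h w.

(* Iterated integration of the hash values h(v), v in s, each against the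
   uniform (Lebesgue) distribution on [0,1]: this is the expectation with
   respect to independent uniform h(v). *)
Fixpoint iter_unif (R : realType) (U : eqType) (s : seq U)
    (F : (U -> R) -> R) (h : U -> R) : R :=
  match s with
  | [::] => F h
  | v :: s' => Rintegral (@lebesgue_measure R) `[0%R, 1%R]
                 (fun x => iter_unif s' F (upd h v x))
  end.

Definition Ehash (R : realType) (U : finType) (F : (U -> R) -> R) : R :=
  iter_unif (enum U) F (fun _ => 0).

Definition Ecoin (R : realType) (I : finType) (q : R)
    (G : {ffun I -> bool} -> R) : R :=
  \sum_(c : {ffun I -> bool}) ((\prod_(i : I) (if c i then q else 1 - q)) * G c).

Definition ubs (R : realType) (U I : finType) (j : I -> U) (p : R)
    (h : U -> R) (c : {ffun I -> bool}) : {set I} :=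
  [set i : I | (h (j i) < p) && c i].

Definition join_size (U I1 I2 : finType) (j1 : I1 -> U) (j2 : I2 -> U)
    (S1 : {set I1}) (S2 : {set I2}) : nat :=
  #|[set x : I1 * I2 | [&& x.1 \in S1, x.2 \in S2 & j1 x.1 == j2 x.2]]|.

Definition Expect (R : realType) (U I1 I2 : finType) (q1 q2 : R)
    (X : (U -> R) -> {ffun I1 -> bool} -> {ffun I2 -> bool} -> R) : R :=
  Ehash (fun h => Ecoin q1 (fun c1 => Ecoin q2 (fun c2 => X h c1 c2))).

Definition Var (R : realType) (U I1 I2 : finType) (q1 q2 : R)
    (X : (U -> R) -> {ffun I1 -> bool} -> {ffun I2 -> bool} -> R) : R :=
  Expect q1 q2 (fun h c1 c2 => (X h c1 c2) ^+ 2) - (Expect q1 q2 X) ^+ 2.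

Definition Jcount (R : realType) (U I1 I2 : finType) (j1 : I1 -> U) (j2 : I2 -> U)
    (p1 q1 p2 q2 : R) (h : U -> R) (c1 : {ffun I1 -> bool}) (c2 : {ffun I2 -> bool}) : R :=
  (join_size j1 j2 (ubs j1 p1 h c1) (ubs j2 p2 h c2))%:R
    / (Num.min p1 p2 * q1 * q2).

From HB Require Import structures.
From mathcomp Require Import all_boot all_order all_algebra.
From mathcomp Require Import all_classical all_reals all_analysis.
From mathcomp Require Import measurable_realfun.
From mathcomp Require Import ring.
Set Implicit Arguments. Unset Strict Implicit. Unset Printing Implicit Defensive.
Import Order.TTheory GRing.Theory Num.Theory.
Local Open Scope ring_scope.

(* Write b_v for the event h(v) < p.  Then |S1 ⋈ S2| = Σ_v b_v S1(v) S2(v), where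
   S_k(v) counts the coins that came up among the tuples of T_k with J-value v.
   Integrating out the perfect hash turns the b_v into independent Bernoulli(p)
   coins, so the estimator is a polynomial in three independent families of
   Bernoulli coins and its moments factor layer by layer.  In the square of the
   sum every cross term with v <> w is the product of the two means, because the
   fibres of distinct values are disjoint; only the diagonal survives, and there
   E[b_v] = p and E[S_k(v)^2] = q_k^2 a^2 + q_k (1 - q_k) a yield the four gammas. *)

Lemma sum_pair_diag (R : nmodType) (U : finType) (F : U * U -> R) :
  (forall v w, v != w -> F (v, w) = 0) -> \sum_x F x = \sum_v F (v, v).
Proof.
move=> offdiag; rewrite (eq_bigr (fun x => F (x.1, x.2))); last by case.
rewrite -(pair_bigA _ (fun v w => F (v, w))); apply: eq_bigr => v _.
rewrite (bigD1 v) //= big1 ?addr0 // => w wv.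
by apply: offdiag; rewrite eq_sym.
Qed.

Section BernoulliCoins.
Variables (R : realType) (I : finType) (q : R).

Lemma eq_Ecoin (G H : {ffun I -> bool} -> R) : G =1 H -> Ecoin q G = Ecoin q H.
Proof. by move=> GH; apply: eq_bigr => c _; rewrite GH. Qed.

Lemma Ecoin_sum (K : finType) (P : pred K) (F : K -> {ffun I -> bool} -> R) :
  Ecoin q (fun c => \sum_(k | P k) F k c) = \sum_(k | P k) Ecoin q (F k).
Proof. by rewrite /Ecoin; under eq_bigr do rewrite mulr_sumr; exact: exchange_big. Qed.

Lemma Ecoin_mull (a : R) (G : {ffun I -> bool} -> R) :
  Ecoin q (fun c => a * G c) = a * Ecoin q G.
Proof. by rewrite /Ecoin mulr_sumr; apply: eq_bigr => c _; rewrite mulrCA. Qed.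

Lemma Ecoin_mulr (a : R) (G : {ffun I -> bool} -> R) :
  Ecoin q (fun c => G c * a) = Ecoin q G * a.
Proof. by rewrite mulrC -Ecoin_mull; apply: eq_Ecoin => c; rewrite mulrC. Qed.

Lemma Ecoin_prod (f : I -> bool -> R) :
  Ecoin q (fun c => \prod_i f i (c i)) = \prod_i (q * f i true + (1 - q) * f i false).
Proof.
rewrite [RHS](eq_bigr (fun i => \sum_b (if b then q else 1 - q) * f i b)); last first.
  by move=> i _; rewrite big_bool.
by rewrite bigA_distr_bigA; apply: eq_bigr => c _; rewrite big_split.
Qed.

Lemma Ecoin_prod_set (A : {set I}) :
  Ecoin q (fun c => \prod_(i in A) (c i)%:R) = q ^+ #|A|.
Proof.
under eq_Ecoin do rewrite big_mkcond /=.
rewrite (Ecoin_prod (fun i b => if i \in A then b%:R else 1)) -prodr_const [RHS]big_mkcond.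
by apply: eq_bigr => i _; case: (i \in A); rewrite /= ?mulr1 ?mulr0 ?addr0 ?subrKC.
Qed.

Lemma Ecoin_coin (i : I) : Ecoin q (fun c => (c i)%:R) = q.
Proof.
rewrite -[RHS]expr1 -(cards1 i) -Ecoin_prod_set.
by apply: eq_Ecoin => c; rewrite big_set1.
Qed.

Lemma Ecoin_coin_pair (i k : I) :
  Ecoin q (fun c => (c i)%:R * (c k)%:R) = q ^+ 2 + (q - q ^+ 2) * (i == k)%:R.
Proof.
have [<-|ik] := eqVneq i k.
  under eq_Ecoin do rewrite -natrM mulnb andbb.
  by rewrite Ecoin_coin mulr1 addrC subrK.
rewrite mulr0 addr0 (_ : 2 = #|[set i; k]|)%N; last by rewrite cards2 ik.
rewrite -Ecoin_prod_set; apply: eq_Ecoin => c.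
by rewrite big_setU1 ?inE //= big_set1.
Qed.

Definition heads (A : {set I}) (c : {ffun I -> bool}) : R := \sum_(i in A) (c i)%:R.

Lemma Ecoin_heads (A : {set I}) : Ecoin q (heads A) = q * #|A|%:R.
Proof.
by rewrite Ecoin_sum; under eq_bigr do rewrite Ecoin_coin; rewrite sumr_const mulr_natr.
Qed.

Lemma sum_eq_mem (A : {set I}) (i : I) : \sum_(k in A) ((i == k)%:R : R) = (i \in A)%:R.
Proof.
have [iA|iA] := boolP (i \in A).
  rewrite (bigD1 i) //= eqxx big1 ?addr0 // => k /andP[_ ki].
  by rewrite eq_sym (negbTE ki).
by rewrite big1 // => k kA; case: eqP => // ik; rewrite ik kA in iA.
Qed.

Lemma Ecoin_heads_pair (A B : {set I}) :
  Ecoin q (fun c => heads A c * heads B c) =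
  q ^+ 2 * #|A|%:R * #|B|%:R + (q - q ^+ 2) * #|A :&: B|%:R.
Proof.
under eq_Ecoin do rewrite /heads big_distrlr /=.
rewrite Ecoin_sum; under eq_bigr do rewrite Ecoin_sum.
under eq_bigr do under eq_bigr do rewrite Ecoin_coin_pair.
under eq_bigr do rewrite big_split /= sumr_const -mulr_sumr sum_eq_mem.
rewrite big_split /= sumr_const -mulr_sumr.
have -> : \sum_(i in A) (i \in B)%:R = #|A :&: B|%:R :> R.
  rewrite -sum1_card natr_sum big_mkcond [RHS]big_mkcond /=; apply: eq_bigr => i _.
  by rewrite inE; case: (i \in A); case: (i \in B).
congr (_ + _).
by rewrite -mulrnA -mulrA -natrM mulr_natr mulnC.
Qed.

End BernoulliCoins.

Arguments heads {R I}.

Section Threshold.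
Variables (R : realType) (p : R).
Hypotheses (p_gt0 : 0 < p) (p_le1 : p <= 1).

Local Open Scope classical_set_scope.

Lemma Rintegral_step (A B : R) :
  Rintegral (@lebesgue_measure R) `[0%R, 1%R] (fun x : R => if x < p then A else B)
  = p * A + (1 - p) * B.
Proof.
have mf : measurable_fun (`[0%R, 1%R] : set R)
    (fun x : R => ((if x < p then A else B)%:E : \bar R)).
  apply: measurable_funTS.
  rewrite (_ : (fun x => _) = (fun x => if x < p then A%:E else B%:E)); last first.
    by apply/funext => x; case: ifP.
  by apply: measurable_fun_ifT => //; exact: measurable_fun_ltr.
rewrite /Rintegral.
rewrite (@itv_bndbnd_setU _ _ _ (BLeft p)) ?bnd_simp ?(ltW p_gt0) // in mf *.
rewrite integral_setU //; last first.
  apply/disj_setPS => x [] /=; rewrite !in_itv /= => /andP[_ xp] /andP[px _].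
  by move: xp; rewrite ltNge px.
rewrite [X in (X + _)%E](eq_integral (cst A%:E)); last first.
  by move=> x; rewrite inE /= in_itv /= => /andP[_ ->].
rewrite [X in (_ + X)%E](eq_integral (cst B%:E)); last first.
  by move=> x; rewrite inE /= in_itv /= => /andP[px _]; rewrite ltNge px.
rewrite !integral_cst //.
rewrite [X in (_ * X + _)%E](_ : _ = p%:E); last first.
  by apply: etrans (lebesgue_measure_itv _) _; rewrite /= lte_fin p_gt0 oppr0 adde0.
rewrite [X in (_ + _ * X)%E](_ : _ = (1 - p)%:E); last first.
  (* [lebesgue_measure_itv] treats the degenerate interval [1, 1] (p = 1) separately *)
  apply: etrans (lebesgue_measure_itv _) _; rewrite /= lte_fin.
  case: ltP => [_|p_ge1] //; have -> : p = 1 by apply/eqP; rewrite eq_le p_le1 -lee_fin.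
  by rewrite subrr.
by rewrite -!EFinM -EFinD /= mulrC [B * _]mulrC.
Qed.
Local Close Scope classical_set_scope.

Variable U : finType.

Fixpoint iter_bern (s : seq U) (G : (U -> bool) -> R) (b : U -> bool) : R :=
  if s is v :: s' then
    p * iter_bern s' G (upd b v true) + (1 - p) * iter_bern s' G (upd b v false)
  else G b.

Lemma iter_unif_threshold (s : seq U) (G : (U -> bool) -> R) (h : U -> R) :
  iter_unif s (fun h => G (fun v => h v < p)) h = iter_bern s G (fun v => h v < p).
Proof.
elim: s h => [//|v s IH] h /=.
rewrite -Rintegral_step; congr Rintegral; apply/funext => x.
rewrite IH; case: ifP => xp; congr iter_bern; apply/funext => w.
  by rewrite /upd; case: (w == v).
by rewrite /upd; case: (w == v).
Qed.

Definition agree_off (s : seq U) (b0 : U -> bool) (b : {ffun U -> bool}) : bool :=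
  [forall v, (v \notin s) ==> (b v == b0 v)].

Lemma agree_off_cons (s : seq U) (v : U) (b0 : U -> bool) (t : bool) (b : {ffun U -> bool}) :
  v \notin s -> agree_off (v :: s) b0 b && (b v == t) = agree_off s (upd b0 v t) b.
Proof.
move=> vs; apply/andP/forallP => [[/forallP agree /eqP bv] w|agree].
  apply/implyP => ws; rewrite /upd; have [->|wv] := eqVneq w v; first by rewrite bv.
  by move: (agree w); rewrite in_cons negb_or wv ws.
split; last by move: (agree v); rewrite vs /upd eqxx.
apply/forallP => w; apply/implyP; rewrite in_cons negb_or => /andP[wv ws].
by move: (agree w); rewrite ws /upd (negbTE wv).
Qed.

Lemma iter_bern_sum (s : seq U) (G : (U -> bool) -> R) (b0 : U -> bool) : uniq s ->
  iter_bern s G b0 =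
  \sum_(b | agree_off s b0 b) (\prod_(v <- s) (if b v then p else 1 - p)) * G b.
Proof.
elim: s b0 => [|v s IH] b0 /= => [_|/andP[vs us]].
  rewrite (big_pred1 [ffun v => b0 v]) ?big_nil ?mul1r.
    by congr G; apply/funext => v; rewrite ffunE.
  move=> b; rewrite /agree_off; apply/forallP/eqP => [agree|-> v].
    by apply/ffunP => v; rewrite ffunE; apply/eqP/agree.
  by rewrite ffunE eqxx implybT.
rewrite (bigID (fun b : {ffun U -> bool} => b v)) /= !IH // !mulr_sumr.
symmetry; congr (_ + _).
  apply: eq_big => b; first by rewrite -(agree_off_cons _ _ _ vs) eqb_id.
  by case/andP => _ bv; rewrite big_cons bv mulrA.
apply: eq_big => b; first by rewrite -(agree_off_cons _ _ _ vs) eqbF_neg.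
by case/andP => _ /negbTE bv; rewrite big_cons bv mulrA.
Qed.

Lemma Ehash_threshold (G : (U -> bool) -> R) :
  Ehash (fun h => G (fun v => h v < p)) = Ecoin p (fun b => G b).
Proof.
rewrite /Ehash iter_unif_threshold iter_bern_sum ?enum_uniq //.
apply: eq_big => [b|b _]; first by apply/forallP => v; rewrite mem_enum.
by rewrite big_enum.
Qed.

End Threshold.

Definition fiber (U I : finType) (j : I -> U) (v : U) : {set I} := [set i | j i == v].

Lemma fiber_disjoint (U I : finType) (j : I -> U) (v w : U) :
  v != w -> [disjoint fiber j v & fiber j w].
Proof.
move=> vw; rewrite -setI_eq0; apply/set0Pn => -[i].
by rewrite !inE => /andP[/eqP jv /eqP jw]; rewrite -jv -jw eqxx in vw.
Qed.

Lemma card_mkset (T : finType) (P : pred T) : #|[set x | P x]%classic| = #|[set x | P x]|.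
Proof. by apply: eq_card => x; rewrite finset.inE unfold_in /in_set asboolb. Qed.

Lemma freq_fiber (U I : finType) (j : I -> U) (v : U) : freq j v = #|fiber j v|.
Proof. by rewrite /freq card_mkset. Qed.

Lemma join_size_fibers (U I1 I2 : finType) (j1 : I1 -> U) (j2 : I2 -> U)
    (S1 : {set I1}) (S2 : {set I2}) :
  join_size j1 j2 S1 S2 = (\sum_v #|S1 :&: fiber j1 v| * #|S2 :&: fiber j2 v|)%N.
Proof.
rewrite /join_size card_mkset -sum1_card (partition_big (fun x => j1 x.1) predT) //=.
apply: eq_bigr => v _; rewrite sum1_card -cardsX; apply: eq_card => -[i k].
rewrite unfold_in /= !finset.inE /=.
have [<-|iv] := eqVneq (j1 i) v; last by rewrite !andbF andFb.
by rewrite !andbT eq_sym.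
Qed.

Lemma card_ubs_fiber (R : realType) (U I : finType) (j : I -> U) (p : R) (h : U -> R)
    (c : {ffun I -> bool}) (v : U) :
  #|ubs j p h c :&: fiber j v|%:R = if h v < p then heads (fiber j v) c else 0 :> R.
Proof.
rewrite /heads -sum1_card natr_sum; case: ifP => hv.
  rewrite big_mkcond [RHS]big_mkcond /=; apply: eq_bigr => i _; rewrite !finset.inE.
  by have [ji|_] := eqVneq (j i) v; rewrite ?andbF // ji hv andbT; case: (c i).
apply: big1 => i; rewrite !finset.inE => /andP[/andP[hji _] /eqP ji].
by rewrite ji hv in hji.
Qed.

Section ThreeLayers.
Variables (R : realType) (U I1 I2 : finType) (p q1 q2 : R).

Definition Ecoin3 (G : {ffun U -> bool} -> {ffun I1 -> bool} -> {ffun I2 -> bool} -> R) : R :=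
  Ecoin p (fun b => Ecoin q1 (fun c1 => Ecoin q2 (fun c2 => G b c1 c2))).

Definition Var3 (G : {ffun U -> bool} -> {ffun I1 -> bool} -> {ffun I2 -> bool} -> R) : R :=
  Ecoin3 (fun b c1 c2 => G b c1 c2 ^+ 2) - Ecoin3 G ^+ 2.

Lemma Ecoin3_mull (a : R) G : Ecoin3 (fun b c1 c2 => a * G b c1 c2) = a * Ecoin3 G.
Proof.
rewrite /Ecoin3 -Ecoin_mull; apply: eq_Ecoin => b.
by rewrite -Ecoin_mull; apply: eq_Ecoin => c1; rewrite Ecoin_mull.
Qed.

Lemma Var3_scale (a : R) G : Var3 (fun b c1 c2 => a * G b c1 c2) = a ^+ 2 * Var3 G.
Proof.
rewrite /Var3; have -> : (fun b c1 c2 => (a * G b c1 c2) ^+ 2) =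
                         (fun b c1 c2 => a ^+ 2 * G b c1 c2 ^+ 2).
  by apply/funext => b; apply/funext => c1; apply/funext => c2; rewrite exprMn.
by rewrite !Ecoin3_mull exprMn mulrBr.
Qed.

Lemma Ecoin3_sum_mul (K : finType) (F : K -> {ffun U -> bool} -> R)
    (G : K -> {ffun I1 -> bool} -> R) (H : K -> {ffun I2 -> bool} -> R) :
  Ecoin3 (fun b c1 c2 => \sum_k F k b * G k c1 * H k c2) =
  \sum_k Ecoin p (F k) * Ecoin q1 (G k) * Ecoin q2 (H k).
Proof.
rewrite /Ecoin3.
transitivity (Ecoin p (fun b => \sum_k F k b * Ecoin q1 (G k) * Ecoin q2 (H k))).
  apply: eq_Ecoin => b.
  transitivity (Ecoin q1 (fun c1 => \sum_k F k b * G k c1 * Ecoin q2 (H k))).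
    by apply: eq_Ecoin => c1; rewrite Ecoin_sum; apply: eq_bigr => k _; rewrite Ecoin_mull.
  by rewrite Ecoin_sum; apply: eq_bigr => k _; rewrite Ecoin_mulr Ecoin_mull.
by rewrite Ecoin_sum; apply: eq_bigr => k _; rewrite !Ecoin_mulr.
Qed.

Lemma Var_threshold (G : (U -> bool) -> {ffun I1 -> bool} -> {ffun I2 -> bool} -> R) :
  0 < p -> p <= 1 ->
  Var q1 q2 (fun h c1 c2 => G (fun v => h v < p) c1 c2) = Var3 (fun b c1 c2 => G b c1 c2).
Proof.
move=> p_gt0 p_le1; rewrite /Var /Expect.
rewrite (Ehash_threshold p_gt0 p_le1
  (fun b => Ecoin q1 (fun c1 => Ecoin q2 (fun c2 => G b c1 c2 ^+ 2)))).
by rewrite (Ehash_threshold p_gt0 p_le1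
  (fun b => Ecoin q1 (fun c1 => Ecoin q2 (fun c2 => G b c1 c2)))).
Qed.

End ThreeLayers.

Section JoinCount.
Variables (R : realType) (U I1 I2 : finType) (j1 : I1 -> U) (j2 : I2 -> U).

Definition join_count (b : U -> bool) (c1 : {ffun I1 -> bool}) (c2 : {ffun I2 -> bool}) : R :=
  \sum_v (b v)%:R * heads (fiber j1 v) c1 * heads (fiber j2 v) c2.

Lemma join_size_ubs (p1 p2 : R) (h : U -> R) c1 c2 :
  (join_size j1 j2 (ubs j1 p1 h c1) (ubs j2 p2 h c2))%:R =
  join_count (fun v => h v < Num.min p1 p2) c1 c2.
Proof.
rewrite join_size_fibers natr_sum; apply: eq_bigr => v _.
rewrite natrM !card_ubs_fiber lt_min.
by case: (h v < p1); case: (h v < p2); rewrite /= ?mul1r ?mul0r ?mulr0.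
Qed.

Lemma Var3_join_count (p q1 q2 : R) :
  Var3 p q1 q2 (fun b c1 c2 => join_count b c1 c2) =
  \sum_v (p * (q1 ^+ 2 * (freq j1 v)%:R ^+ 2 + q1 * (1 - q1) * (freq j1 v)%:R)
             * (q2 ^+ 2 * (freq j2 v)%:R ^+ 2 + q2 * (1 - q2) * (freq j2 v)%:R)
          - (p * q1 * q2 * (freq j1 v)%:R * (freq j2 v)%:R) ^+ 2).
Proof.
pose m v := p * (q1 * (freq j1 v)%:R) * (q2 * (freq j2 v)%:R).
have mean : Ecoin3 p q1 q2 (fun b c1 c2 => join_count b c1 c2) = \sum_v m v.
  rewrite (Ecoin3_sum_mul _ _ _ (fun v (b : {ffun U -> bool}) => (b v)%:R)
    (fun v => heads (fiber j1 v)) (fun v => heads (fiber j2 v))).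
  by apply: eq_bigr => v _; rewrite Ecoin_coin !Ecoin_heads -!freq_fiber.
rewrite /Var3 mean.
have -> : (fun (b : {ffun U -> bool}) c1 c2 => join_count b c1 c2 ^+ 2) = (fun b c1 c2 =>
    \sum_(x : U * U) ((b x.1)%:R * (b x.2)%:R)
      * (heads (fiber j1 x.1) c1 * heads (fiber j1 x.2) c1)
      * (heads (fiber j2 x.1) c2 * heads (fiber j2 x.2) c2)).
  apply/funext => b; apply/funext => c1; apply/funext => c2.
  rewrite expr2 /join_count big_distrlr pair_bigA; apply: eq_bigr => -[v w] _ /=; ring.
rewrite (Ecoin3_sum_mul _ _ _
    (fun x (b : {ffun U -> bool}) => (b x.1)%:R * (b x.2)%:R)
    (fun x c1 => heads (fiber j1 x.1) c1 * heads (fiber j1 x.2) c1)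
    (fun x c2 => heads (fiber j2 x.1) c2 * heads (fiber j2 x.2) c2)).
rewrite expr2 big_distrlr pair_bigA -sumrB sum_pair_diag => [|v w vw] /=.
  apply: eq_bigr => v _.
  by rewrite Ecoin_coin_pair !Ecoin_heads_pair !finset.setIid -!freq_fiber eqxx /m /=; ring.
rewrite Ecoin_coin_pair !Ecoin_heads_pair (negbTE vw) /m.
by rewrite !(disjoint_setI0 (fiber_disjoint _ vw)) !cards0 -!freq_fiber /=; ring.
Qed.

End JoinCount.

Arguments join_count {R U I1 I2}.

Theorem lemma1 (R : realType) (U I1 I2 : finType) (j1 : I1 -> U) (j2 : I2 -> U)
    (p1 q1 p2 q2 : R)
    (hp1 : 0 < p1) (hp1' : p1 <= 1) (hq1 : 0 < q1) (hq1' : q1 <= 1)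
    (hp2 : 0 < p2) (hp2' : p2 <= 1) (hq2 : 0 < q2) (hq2' : q2 <= 1) :
  let p := Num.min p1 p2 in
  Var q1 q2 (Jcount j1 j2 p1 q1 p2 q2) =
    (1 - p) / p * gamma R j1 j2 2 2
    + (1 - q2) / (p * q2) * gamma R j1 j2 2 1
    + (1 - q1) / (p * q1) * gamma R j1 j2 1 2
    + (1 - q1) * (1 - q2) / (p * q1 * q2) * gamma R j1 j2 1 1.
Proof.
move=> p.
have p_gt0 : 0 < p by rewrite lt_min hp1 hp2.
have p_le1 : p <= 1 by rewrite ge_min hp1'.
have -> : Jcount j1 j2 p1 q1 p2 q2 =
    fun h c1 c2 => (p * q1 * q2)^-1 * join_count j1 j2 (fun v => h v < p) c1 c2.
  apply/funext => h; apply/funext => c1; apply/funext => c2.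
  by rewrite /Jcount join_size_ubs mulrC.
rewrite (Var_threshold q1 q2 (fun b c1 c2 => (p * q1 * q2)^-1 * join_count j1 j2 b c1 c2)
  p_gt0 p_le1).
rewrite Var3_scale Var3_join_count /gamma !mulr_sumr -!big_split /=.
apply: eq_bigr => v _.
by field; rewrite !gt_eqF.
Qed.
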